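(* Let $F \colon Q = I \times J \to \mathbb{W}$ be a horizontal $(M,\epsilon)$-quasi-isometric embedding, where $I,J \subset \mathbb{R}$ are intervals with $|I| > 2M^{2}\sqrt{|J|} + 4M\epsilon$. Then for each fixed $(y_{0},t_{0}) \in Q$, the maps $y \mapsto \pi_{1}(F(y,t_{0}))$ and $t \mapsto \pi_{2}(F(y_{0},t))$ are $(M,2\epsilon)$-quasi-isometric embeddings $(I,|\cdot|) \to (\mathbb{R},|\cdot|)$ and $(J,\|\cdot\|) \to (\mathbb{R},\|\cdot\|)$, respectively.
   Context: $\mathbb{W}$ is $\mathbb{R}^{2}$ with the metric $d_{\mathrm{par}}((y,t),(\xi,\tau)) = \max\{|y-\xi|,|t-\tau|^{1/2}\}$; $\pi_{1}(y,t) = y$, $\pi_{2}(y,t) = t$; horizontal lines in $\mathbb{W}$ are the sets $\mathbb{R} \times \{t\}$. $\|x-y\| := \sqrt{|x-y|}$ is the square root metric on $\mathbb{R}$. A map $F \colon (X,d) \to (Y,d')$ is an $(M,\epsilon)$-quasi-isometric embedding if $M^{-1}d(x,y) - \epsilon \leq d'(F(x),F(y)) \leq Md(x,y) + \epsilon$ for all $x,y$. For a rectangle $Q = I \times J$, $F \colon Q \to \mathbb{W}$ is a horizontal $(M,\epsilon)$-quasi-isometric embedding if it is an $(M,\epsilon)$-quasi-isometric embedding w.r.t. $d_{\mathrm{par}}$ and for every $t \in J$ there is a horizontal line $\ell_{t} \subset \mathbb{W}$ with $F(I \times \{t\}) \subset \ell_{t}$. *)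

From Stdlib Require Import Reals.
Open Scope R_scope.

Definition W := (R * R)%type.
Definition pi1 (p : W) : R := fst p.
Definition pi2 (p : W) : R := snd p.
Definition d_par (p q : W) : R :=
  Rmax (Rabs (fst p - fst q)) (sqrt (Rabs (snd p - snd q))).

Definition d_eucl (x y : R) : R := Rabs (x - y).
Definition d_sqrt (x y : R) : R := sqrt (Rabs (x - y)).

Definition qi_embedding {X Y : Type} (A : X -> Prop) (d : X -> X -> R)
  (d' : Y -> Y -> R) (f : X -> Y) (M eps : R) : Prop :=
  forall x y, A x -> A y ->
    / M * d x y - eps <= d' (f x) (f y) /\ d' (f x) (f y) <= M * d x y + eps.

(* I is a bounded interval with endpoints a <= b (any of the four types);
   its length |I| is b - a. *)
Definition is_interval (I : R -> Prop) (a b : R) : Prop :=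
  a <= b /\ (forall x, a < x < b -> I x) /\ (forall x, I x -> a <= x <= b).

Definition rect (I J : R -> Prop) : W -> Prop := fun p => I (fst p) /\ J (snd p).

Definition horizontal_qi (I J : R -> Prop) (F : W -> W) (M eps : R) : Prop :=
  qi_embedding (rect I J) d_par d_par F M eps /\
  forall t, J t -> exists s : R, forall y, I y -> pi2 (F (y, t)) = s.

From Stdlib Require Import Reals Lra Psatz.
Open Scope R_scope.

(* On horizontal lines d_par is the Euclidean distance of first coordinates and on
   vertical lines it is the square-root distance of second coordinates; this gives
   everything except the lower bound in t.  For that, fix t, t', put
   S = sqrt |t - t'| and g = pi1 F(., t).  On a centred subinterval of I of radius
   r > M (M S + 2 eps), g is a quasi-isometric embedding into R.  Such a map cannot
   fold back, so by a coarse intermediate value theorem it comes within any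
   e > eps/2 of p = pi1 F(m, t'), which is within M S + eps of g m.  Then F(z, t)
   and F(m, t') have nearly equal first coordinates although (z, t) and (m, t') are
   at parabolic distance at least S, so the lower quasi-isometry bound is carried by
   the second coordinates, which are pi2 F(y0, t) and pi2 F(y0, t'). *)

Lemma Rabs_le_iff (x e : R) : Rabs x <= e <-> - e <= x <= e.
Proof. unfold Rabs; destruct Rcase_abs; split; intros; lra. Qed.

Lemma between_near_endpoint (a b q e : R) :
  (a <= q <= b \/ b <= q <= a) -> Rabs (b - a) <= 2 * e ->
  Rabs (a - q) <= e \/ Rabs (b - q) <= e.
Proof.
  intros Hq Hab. rewrite Rabs_le_iff in Hab.
  destruct (Rle_or_lt (Rabs (a - q)) e) as [Ha | Ha]; [now left | right].
  rewrite Rabs_le_iff. unfold Rabs in Ha; destruct Rcase_abs; lra.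
Qed.

Lemma discrete_ivt (s : nat -> R) (n : nat) (q e : R) :
  0 <= e ->
  (forall k, (k < n)%nat -> Rabs (s (S k) - s k) <= 2 * e) ->
  (s O <= q <= s n \/ s n <= q <= s O) ->
  exists k, (k <= n)%nat /\ Rabs (s k - q) <= e.
Proof.
  intros He. induction n as [|n IH]; intros Hjump Hq.
  - exists O. split; [lia|]. rewrite Rabs_le_iff. lra.
  - assert (Hcase : (s O <= q <= s n \/ s n <= q <= s O) \/
                    (s n <= q <= s (S n) \/ s (S n) <= q <= s n)).
    { destruct (Rle_or_lt q (s n)); destruct Hq;
        first [left; left; lra | left; right; lra | right; left; lra | right; right; lra]. }
    destruct Hcase as [Hq' | Hq'].
    + destruct IH as [k [Hk Hsk]]; [intros k Hk; apply Hjump; lia | exact Hq' |].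
      exists k. split; [lia | exact Hsk].
    + destruct (between_near_endpoint (s n) (s (S n)) q e Hq' (Hjump n ltac:(lia)))
        as [H | H]; [exists n | exists (S n)]; split; auto; lia.
Qed.

Lemma coarse_ivt (g : R -> R) (u v q M eps e : R) :
  u <= v -> 0 < M -> 0 <= eps -> eps / 2 < e ->
  (forall x y, u <= x <= v -> u <= y <= v ->
     Rabs (g x - g y) <= M * Rabs (x - y) + eps) ->
  (g u <= q <= g v \/ g v <= q <= g u) ->
  exists z, u <= z <= v /\ Rabs (g z - q) <= e.
Proof.
  intros Huv HM Heps He Hg Hq.
  destruct (INR_archimed (2 * e - eps) (M * (v - u))) as [n Hn]; [lra|].
  assert (Hn0 : 0 < INR n).
  { destruct n as [|n]; [simpl in Hn; nra | apply lt_0_INR; lia]. }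
  set (h := (v - u) / INR n).
  assert (Hh : 0 <= h) by (apply Rle_mult_inv_pos; lra).
  assert (HMh : M * h < 2 * e - eps).
  { unfold h. apply Rmult_lt_reg_r with (INR n); [exact Hn0|].
    replace (M * ((v - u) / INR n) * INR n) with (M * (v - u)) by (field; lra). lra. }
  set (x := fun k => u + INR k * h).
  assert (Hxn : x n = v) by (unfold x, h; field; lra).
  assert (Hx : forall k, (k <= n)%nat -> u <= x k <= v).
  { intros k Hk. apply le_INR in Hk. unfold x.
    assert (INR k * h <= INR n * h) by (apply Rmult_le_compat_r; lra).
    assert (INR n * h = v - u) by (unfold h; field; lra).
    pose proof (pos_INR k). nra. }
  destruct (discrete_ivt (fun k => g (x k)) n q e) as [k [Hk Hgk]].
  - lra.
  - intros k Hk.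
    assert (Hstep : Rabs (x (S k) - x k) = h).
    { unfold x. rewrite S_INR. replace (u + (INR k + 1) * h - (u + INR k * h)) with h by ring.
      apply Rabs_right; lra. }
    rewrite <- Hstep in HMh. pose proof (Hg (x (S k)) (x k) (Hx (S k) Hk) (Hx k ltac:(lia))). lra.
  - simpl. replace (x O) with u by (unfold x; simpl; ring). rewrite Hxn. exact Hq.
  - exists (x k). split; [apply Hx, Hk | exact Hgk].
Qed.

Lemma qi_embedding_sub {X Y : Type} (A A' : X -> Prop) d d' (f : X -> Y) (M eps eps' : R) :
  (forall x, A' x -> A x) -> eps <= eps' ->
  qi_embedding A d d' f M eps -> qi_embedding A' d d' f M eps'.
Proof.
  intros HA He Hf x y Hx Hy. destruct (Hf x y (HA x Hx) (HA y Hy)). split; lra.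
Qed.

Lemma qi_embedding_coarse_lipschitz {X : Type} (A : X -> Prop) d (g : X -> R) (M eps : R) :
  qi_embedding A d d_eucl g M eps ->
  forall x y, A x -> A y -> d_eucl (g x) (g y) <= M * d x y + eps.
Proof. intros Hg x y Hx Hy. exact (proj2 (Hg x y Hx Hy)). Qed.

Lemma d_eucl_opp (x y : R) : d_eucl (- x) (- y) = d_eucl x y.
Proof. unfold d_eucl. rewrite <- Rabs_Ropp. f_equal. ring. Qed.

Lemma qi_embedding_opp {X : Type} (A : X -> Prop) d (g : X -> R) (M eps : R) :
  qi_embedding A d d_eucl g M eps -> qi_embedding A d d_eucl (fun x => - g x) M eps.
Proof. intros Hg x y Hx Hy. rewrite d_eucl_opp. exact (Hg x y Hx Hy). Qed.

Section QIEmbeddingOfInterval.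

Variables (g : R -> R) (m r M eps : R).
Hypotheses (HM : 0 < M) (Heps : 0 <= eps).
Hypothesis Hg : qi_embedding (fun x => m - r <= x <= m + r) d_eucl d_eucl g M eps.

Lemma qi_far_value_not_just_below (x D : R) :
  m - r <= x <= m + r -> M * (D + eps) < Rabs (x - m) ->
  g m - D <= g x -> g m <= g x.
Proof.
  intros Hx Hfar Hgx. destruct (Rle_or_lt (g m) (g x)) as [H | H]; [exact H | exfalso].
  assert (Hm : m - r <= m <= m + r) by lra.
  destruct (Hg x m Hx Hm) as [Hlow _]. unfold d_eucl in Hlow.
  rewrite (Rabs_left (g x - g m)) in Hlow by lra.
  assert (Rabs (x - m) <= M * (g m - g x + eps)).
  { replace (Rabs (x - m)) with (M * (/ M * Rabs (x - m))) by (field; lra).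
    apply Rmult_le_compat_l; lra. }
  assert (M * (g m - g x + eps) <= M * (D + eps)) by (apply Rmult_le_compat_l; lra).
  lra.
Qed.

Lemma qi_no_fold (p D : R) :
  eps <= D -> M * (D + eps) < r ->
  g m - D <= p -> p <= g (m - r) -> p <= g (m + r) -> False.
Proof.
  intros HD Hr Hp Hleft Hright.
  assert (H2eps : 2 * (M * eps) < r) by nra.
  assert (Hr0 : 0 < r) by nra.
  assert (Hgl : g m <= g (m - r)).
  { apply (qi_far_value_not_just_below (m - r) D); [lra | | lra].
    replace (m - r - m) with (- r) by ring. rewrite Rabs_Ropp, Rabs_right; lra. }
  assert (Hgr : g m <= g (m + r)).
  { apply (qi_far_value_not_just_below (m + r) D); [lra | | lra].
    replace (m + r - m) with r by ring. rewrite Rabs_right; lra. }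
  set (e := (r / M - eps) / 2).
  assert (He : eps / 2 < e).
  { unfold e. enough (2 * eps < r / M) by lra.
    apply Rmult_lt_reg_l with M; [lra|]. replace (M * (r / M)) with r by (field; lra). lra. }
  assert (Hsep : forall z w, m - r <= z <= m + r -> m - r <= w <= m + r ->
                   r <= Rabs (z - w) -> e < Rabs (g z - g w)).
  { intros z w Hz Hw Hzw. destruct (Hg z w Hz Hw) as [Hlow _]. unfold d_eucl in Hlow.
    assert (r / M <= / M * Rabs (z - w)).
    { unfold Rdiv. rewrite Rmult_comm. apply Rmult_le_compat_l; [left; apply Rinv_0_lt_compat|]; lra. }
    unfold e in *. lra. }
  pose proof (qi_embedding_coarse_lipschitz _ _ _ _ _ Hg) as Hup.
  (* The smaller endpoint value lies between g m and the other endpoint value, so it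
     is coarsely attained on the far half, at distance at least r from its point. *)
  destruct (Rle_or_lt (g (m - r)) (g (m + r))) as [Hlr | Hlr].
  - destruct (coarse_ivt g m (m + r) (g (m - r)) M eps e) as [z [Hz Hgz]]; try lra.
    + intros x y Hx Hy. apply Hup; cbv beta; lra.
    + pose proof (Hsep z (m - r) ltac:(lra) ltac:(lra)) as Hzr.
      rewrite Rabs_right in Hzr by lra. lra.
  - destruct (coarse_ivt g (m - r) m (g (m + r)) M eps e) as [z [Hz Hgz]]; try lra.
    + intros x y Hx Hy. apply Hup; cbv beta; lra.
    + pose proof (Hsep z (m + r) ltac:(lra) ltac:(lra)) as Hzr.
      rewrite Rabs_left1 in Hzr by lra. lra.
Qed.

End QIEmbeddingOfInterval.

Lemma qi_hits_near (g : R -> R) (m r M eps p D e : R) :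
  0 < M -> 0 <= eps ->
  qi_embedding (fun x => m - r <= x <= m + r) d_eucl d_eucl g M eps ->
  eps <= D -> M * (D + eps) < r -> Rabs (g m - p) <= D -> eps / 2 < e ->
  exists z, m - r <= z <= m + r /\ Rabs (g z - p) <= e.
Proof.
  intros HM Heps Hg HD Hr Hp He. rewrite Rabs_le_iff in Hp.
  assert (Hr0 : 0 < r) by nra.
  pose proof (qi_embedding_coarse_lipschitz _ _ _ _ _ Hg) as Hup.
  destruct (Rle_or_lt p (g (m - r))) as [Hl | Hl];
    destruct (Rle_or_lt p (g (m + r))) as [Hr' | Hr'].
  - exfalso. apply (qi_no_fold g m r M eps HM Heps Hg p D); lra.
  - apply (coarse_ivt g (m - r) (m + r) p M eps e); auto; lra.
  - apply (coarse_ivt g (m - r) (m + r) p M eps e); auto; lra.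
  - exfalso.
    apply (qi_no_fold (fun x => - g x) m r M eps HM Heps (qi_embedding_opp _ _ _ _ _ Hg) (- p) D);
      lra.
Qed.

Lemma interval_contains_centered (I : R -> Prop) (a b rho : R) :
  is_interval I a b -> 2 * rho < b - a ->
  exists m r, rho < r /\ forall x, m - r <= x <= m + r -> I x.
Proof.
  intros [_ [Hin _]] Hrho. exists ((a + b) / 2), ((rho + (b - a) / 2) / 2).
  split; [lra|]. intros x Hx. apply Hin. lra.
Qed.

Lemma d_sqrt_le_sqrt_length (J : R -> Prop) (c d t t' : R) :
  is_interval J c d -> J t -> J t' -> d_sqrt t t' <= sqrt (d - c).
Proof.
  intros [_ [_ Hout]] Ht Ht'. apply sqrt_le_1_alt.
  destruct (Hout t Ht), (Hout t' Ht'). apply Rabs_le_iff. lra.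
Qed.

Lemma d_par_horizontal (p q : W) : pi2 p = pi2 q -> d_par p q = d_eucl (pi1 p) (pi1 q).
Proof.
  unfold d_par, d_eucl, pi1, pi2. intros ->. rewrite Rminus_diag, Rabs_R0, sqrt_0.
  apply Rmax_left, Rabs_pos.
Qed.

Lemma d_par_vertical (p q : W) : pi1 p = pi1 q -> d_par p q = d_sqrt (pi2 p) (pi2 q).
Proof.
  unfold d_par, d_sqrt, pi1, pi2. intros ->. rewrite Rminus_diag, Rabs_R0.
  apply Rmax_right, sqrt_pos.
Qed.

Lemma d_eucl_le_d_par (p q : W) : d_eucl (pi1 p) (pi1 q) <= d_par p q.
Proof. apply Rmax_l. Qed.

Lemma d_sqrt_le_d_par (p q : W) : d_sqrt (pi2 p) (pi2 q) <= d_par p q.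
Proof. apply Rmax_r. Qed.

Section HorizontalQI.

Variables (I J : R -> Prop) (F : W -> W) (M eps : R).
Hypothesis hF : horizontal_qi I J F M eps.

Lemma horizontal_level (y y' t : R) :
  I y -> I y' -> J t -> pi2 (F (y, t)) = pi2 (F (y', t)).
Proof.
  intros Hy Hy' Ht. destruct (proj2 hF t Ht) as [s Hs]. now rewrite (Hs y Hy), (Hs y' Hy').
Qed.

Lemma horizontal_line_qi (t : R) :
  J t -> qi_embedding I d_eucl d_eucl (fun y => pi1 (F (y, t))) M eps.
Proof.
  intros Ht y y' Hy Hy'.
  destruct (proj1 hF (y, t) (y', t) (conj Hy Ht) (conj Hy' Ht)) as [Hlow Hup].
  rewrite (d_par_horizontal (F (y, t))), (d_par_horizontal (y, t)) in Hlow, Hup;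
    auto using horizontal_level.
Qed.

Lemma vertical_upper_bound (y0 t t' : R) :
  I y0 -> J t -> J t' ->
  d_sqrt (pi2 (F (y0, t))) (pi2 (F (y0, t'))) <= M * d_sqrt t t' + eps.
Proof.
  intros Hy0 Ht Ht'.
  destruct (proj1 hF (y0, t) (y0, t') (conj Hy0 Ht) (conj Hy0 Ht')) as [_ Hup].
  rewrite (d_par_vertical (y0, t)) in Hup by reflexivity.
  pose proof (d_sqrt_le_d_par (F (y0, t)) (F (y0, t'))). simpl in Hup. lra.
Qed.

Hypotheses (HM : 0 < M) (Heps : 0 <= eps).

Lemma vertical_lower_of_close_pair (y0 z w t t' : R) :
  I y0 -> I z -> I w -> J t -> J t' ->
  d_eucl (pi1 (F (z, t))) (pi1 (F (w, t'))) < / M * d_sqrt t t' - eps ->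
  / M * d_sqrt t t' - eps <= d_sqrt (pi2 (F (y0, t))) (pi2 (F (y0, t'))).
Proof.
  intros Hy0 Hz Hw Ht Ht' Hclose.
  destruct (proj1 hF (z, t) (w, t') (conj Hz Ht) (conj Hw Ht')) as [Hlow _].
  assert (/ M * d_sqrt t t' <= / M * d_par (z, t) (w, t')).
  { apply Rmult_le_compat_l; [left; apply Rinv_0_lt_compat; exact HM|].
    exact (d_sqrt_le_d_par (z, t) (w, t')). }
  rewrite (horizontal_level y0 z t), (horizontal_level y0 w t'); auto.
  change (d_par (F (z, t)) (F (w, t')))
    with (Rmax (d_eucl (pi1 (F (z, t))) (pi1 (F (w, t'))))
               (d_sqrt (pi2 (F (z, t))) (pi2 (F (w, t'))))) in Hlow.
  revert Hlow. apply Rmax_case_strong; intros; lra.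
Qed.

Lemma close_pair_exists (a b t t' : R) :
  is_interval I a b -> J t -> J t' ->
  2 * (M * (M * d_sqrt t t' + 2 * eps)) < b - a -> 2 * eps < / M * d_sqrt t t' ->
  exists z w, I z /\ I w /\
    d_eucl (pi1 (F (z, t))) (pi1 (F (w, t'))) < / M * d_sqrt t t' - eps.
Proof.
  intros hI Ht Ht' Hlen Hfar.
  destruct (interval_contains_centered I a b (M * (M * d_sqrt t t' + 2 * eps)) hI Hlen)
    as [m [r [Hr Hsub]]].
  assert (HS : 0 <= M * d_sqrt t t') by (apply Rmult_le_pos; [lra | apply sqrt_pos]).
  assert (Hr0 : 0 <= r) by nra.
  assert (Hm : I m) by (apply Hsub; lra).
  assert (Hnear : Rabs (pi1 (F (m, t)) - pi1 (F (m, t'))) <= M * d_sqrt t t' + eps).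
  { destruct (proj1 hF (m, t) (m, t') (conj Hm Ht) (conj Hm Ht')) as [_ Hup].
    rewrite (d_par_vertical (m, t)) in Hup by reflexivity.
    pose proof (d_eucl_le_d_par (F (m, t)) (F (m, t'))). unfold d_eucl in *. simpl in Hup. lra. }
  destruct (qi_hits_near (fun y => pi1 (F (y, t))) m r M eps (pi1 (F (m, t')))
              (M * d_sqrt t t' + eps) ((/ M * d_sqrt t t' - eps) / 2))
    as [z [Hz Hgz]]; try lra.
  - exact (qi_embedding_sub I _ _ _ _ M eps eps Hsub (Rle_refl _) (horizontal_line_qi t Ht)).
  - exists z, m. repeat split; auto. unfold d_eucl. lra.
Qed.

Lemma vertical_lower_bound (a b c d y0 t t' : R) :
  is_interval I a b -> is_interval J c d ->
  b - a > 2 * M ^ 2 * sqrt (d - c) + 4 * M * eps ->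
  I y0 -> J t -> J t' ->
  / M * d_sqrt t t' - 2 * eps <= d_sqrt (pi2 (F (y0, t))) (pi2 (F (y0, t'))).
Proof.
  intros hI hJ hlen Hy0 Ht Ht'.
  pose proof (sqrt_pos (Rabs (pi2 (F (y0, t)) - pi2 (F (y0, t'))))).
  destruct (Rle_or_lt (/ M * d_sqrt t t') (2 * eps)) as [Hnear | Hfar];
    [unfold d_sqrt in *; lra|].
  assert (Hlen : 2 * (M * (M * d_sqrt t t' + 2 * eps)) < b - a).
  { assert (M * M * d_sqrt t t' <= M * M * sqrt (d - c)).
    { apply Rmult_le_compat_l; [nra|]. exact (d_sqrt_le_sqrt_length J c d t t' hJ Ht Ht'). }
    replace (M ^ 2) with (M * M) in hlen by ring. lra. }
  destruct (close_pair_exists a b t t' hI Ht Ht' Hlen Hfar) as [z [w [Hz [Hw Hclose]]]].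
  pose proof (vertical_lower_of_close_pair y0 z w t t' Hy0 Hz Hw Ht Ht' Hclose). lra.
Qed.

End HorizontalQI.

Theorem lemma3p14 (I J : R -> Prop) (a b c d : R) (F : W -> W) (M eps : R)
  (hM : 1 <= M) (heps : 0 <= eps)
  (hI : is_interval I a b) (hJ : is_interval J c d)
  (hlen : b - a > 2 * M ^ 2 * sqrt (d - c) + 4 * M * eps)
  (hF : horizontal_qi I J F M eps) :
  forall y0 t0, I y0 -> J t0 ->
    qi_embedding I d_eucl d_eucl (fun y => pi1 (F (y, t0))) M (2 * eps) /\
    qi_embedding J d_sqrt d_sqrt (fun t => pi2 (F (y0, t))) M (2 * eps).
Proof.
  intros y0 t0 Hy0 Ht0.
  assert (HM : 0 < M) by lra.
  split.
  - apply (qi_embedding_sub I I _ _ _ M eps); [tauto | lra |].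
    exact (horizontal_line_qi I J F M eps hF t0 Ht0).
  - intros t t' Ht Ht'. split.
    + exact (vertical_lower_bound I J F M eps hF HM heps a b c d y0 t t' hI hJ hlen Hy0 Ht Ht').
    + pose proof (vertical_upper_bound I J F M eps hF y0 t t' Hy0 Ht Ht'). lra.
Qed.
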